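(* Let $F:\mathbb{R}^n\rightrightarrows\mathbb{R}^n$ be continuous with $F(x)$ nonempty, compact and convex for all $x$, and assume $\Sigma:\dot x\in F(x)$ is forward complete. Let $X_o\subset\mathbb{R}^n$, let $\bar\epsilon:\mathbb{R}^n\to\mathbb{R}_{>0}$ be continuous, and let $K_{\bar\epsilon}$ be the reachable set defined below. Then for each continuous $\epsilon:\mathbb{R}^n\to\mathbb{R}_{\ge0}$ with $\epsilon(x)<\bar\epsilon(x)$ for all $x\in\mathbb{R}^n$: (P1) $\mathrm{cl}(K_{\bar\epsilon})$ is forward contractive for $\Sigma_\epsilon$; (P2) $\mathbb{R}^n\setminus\mathrm{int}(K_{\bar\epsilon})$ is forward contractive for $\Sigma^-_\epsilon$; (P3) solutions of $\Sigma_\epsilon$ starting in $\mathrm{int}(K_{\bar\epsilon})$ never reach $\partial K_{\bar\epsilon}$ at positive times; (P4) solutions of $\Sigma_\epsilon$ starting in $\mathbb{R}^n\setminus\mathrm{cl}(K_{\bar\epsilon})$ never reach $\partial K_{\bar\epsilon}$ at negative times.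
   Context: $\mathbb{B}$ is the closed unit ball. Continuity of a set-valued map means upper and lower semicontinuity. Solutions of a differential inclusion are locally absolutely continuous functions on an interval containing $0$ (possibly including negative times) satisfying the inclusion a.e.; maximal solutions are non-extendable; $\mathcal{S}_{\Sigma'}(x)$ is the set of maximal solutions of $\Sigma'$ with $\phi(0)=x$. Forward complete: every maximal solution is defined on an interval unbounded to the right. $\Sigma_\epsilon$: $\dot x\in F(x)+\epsilon(x)\mathbb{B}$; $\Sigma^-_\epsilon$: $\dot x\in -F(x)+\epsilon(x)\mathbb{B}$. For $t\ge0$, $R_{\Sigma'}(t,x):=\{\phi(s):\phi\in\mathcal{S}_{\Sigma'}(x),\ s\in\mathrm{dom}\,\phi\cap[0,t]\}$. $K_{\bar\epsilon}:=\bigcup_{t\ge0}\bigcup_{x\in X_o}R_{\Sigma_{\bar\epsilon}}(t,x)$. A closed set $K$ is forward invariant for $\Sigma'$ if every solution starting in $K$ stays in $K$; it is forward contractive if it is forward invariant and for every $x_o\in\partial K$ and $\phi\in\mathcal{S}_{\Sigma'}(x_o)$ there is $T>0$ with $\phi(t)\in\mathrm{int}(K)$ for all $t\in\mathrm{dom}\,\phi\cap(0,T]$. *)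

From HB Require Import structures.
From mathcomp Require Import all_boot all_order all_algebra.
From mathcomp Require Import all_classical all_reals all_analysis.
Set Implicit Arguments. Unset Strict Implicit. Unset Printing Implicit Defensive.
Import Order.TTheory GRing.Theory Num.Theory.
Import numFieldNormedType.Exports.
Local Open Scope classical_set_scope.
Local Open Scope ring_scope.

Section Defs.
Variables (R : realType) (n : nat).
Local Notation V := 'rV[R]_n.

Definition enorm (v : V) : R := Num.sqrt (\sum_(i < n) v ord0 i ^+ 2).

Definition unit_ball : set V := [set v | enorm v <= 1].

Definition convex_set_rV (A : set V) : Prop :=
  forall a b, A a -> A b -> forall l : R, 0 <= l <= 1 -> A ((1 - l) *: a + l *: b).

Definition usc (F : V -> set V) : Prop :=
  forall x (U : set V), open U -> F x `<=` U -> \forall y \near x, F y `<=` U.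
Definition lsc (F : V -> set V) : Prop :=
  forall x (U : set V), open U -> F x `&` U !=set0 ->
    \forall y \near x, F y `&` U !=set0.
Definition sv_continuous (F : V -> set V) : Prop := usc F /\ lsc F.

Definition inflate (G : V -> set V) (e : V -> R) : V -> set V :=
  fun x => [set y + e x *: b | y in G x & b in unit_ball].
Definition negmap (G : V -> set V) : V -> set V := fun x => [set - y | y in G x].

Definition abs_cont_on (a b : R) (phi : R -> V) : Prop :=
  forall e : R, 0 < e -> exists2 d : R, 0 < d &
    forall (m : nat) (s t : 'I_m -> R),
      (forall k, a <= s k /\ s k <= t k /\ t k <= b) ->
      (forall k l, k != l -> t k <= s l \/ t l <= s k) ->
      \sum_(k < m) (t k - s k) < d ->
      \sum_(k < m) enorm (phi (t k) - phi (s k)) < e.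

Definition is_solution (G : V -> set V) (D : set R) (phi : R -> V) : Prop :=
  [/\ is_interval D, D 0,
      (forall a b, a <= b -> `[a, b] `<=` D -> abs_cont_on a b phi) &
      {ae (@lebesgue_measure R), forall t, D t ->
          derivable phi t 1 /\ G (phi t) ('D_1 phi t)}].

Definition maximal_solution (G : V -> set V) (x : V) (D : set R) (phi : R -> V) : Prop :=
  [/\ is_solution G D phi, phi 0 = x &
      ~ exists D' psi, [/\ is_solution G D' psi, D `<` D' &
                          forall t, D t -> psi t = phi t]].

Definition forward_complete (G : V -> set V) : Prop :=
  forall x D phi, maximal_solution G x D phi -> forall M : R, exists t, D t /\ M < t.

Definition reach (G : V -> set V) (t : R) (x : V) : set V :=
  [set y | exists D phi, maximal_solution G x D phi /\
                         exists s, [/\ D s, 0 <= s, s <= t & y = phi s]].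

Definition Kset (F : V -> set V) (ebar : V -> R) (Xo : set V) : set V :=
  [set y | exists t, 0 <= t /\ exists2 x, Xo x & reach (inflate F ebar) t x y].

Definition boundary (A : set V) : set V := closure A `\` interior A.

Definition forward_invariant (G : V -> set V) (K : set V) : Prop :=
  forall D phi, is_solution G D phi -> K (phi 0) -> forall t, D t -> 0 <= t -> K (phi t).

Definition forward_contractive (G : V -> set V) (K : set V) : Prop :=
  [/\ closed K, forward_invariant G K &
      forall x0, boundary K x0 -> forall D phi, maximal_solution G x0 D phi ->
        exists2 T : R, 0 < T & forall t, D t -> 0 < t -> t <= T -> interior K (phi t)].

End Defs.

From HB Require Import structures.
From mathcomp Require Import all_boot all_order all_algebra.
From mathcomp Require Import all_classical all_reals all_analysis.
From mathcomp Require Import ring lra measurable_realfun.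
Import Order.TTheory GRing.Theory Num.Theory.
Import numFieldNormedType.Exports.
Local Open Scope classical_set_scope.
Local Open Scope ring_scope.

(* A solution p of the eps-inflated inclusion that starts in cl K and runs for
   a time L > 0 ends in int K.  Along p the margin ebar - eps is at least some
   4 m > 0, and by continuity of F and compactness of [0, L] there is a tube of
   radius eta around p in which F changes by less than m (in the sense of
   excess) and ebar exceeds eps + 2 m.  Given y in K close to p 0 and any z
   close to p L, the path p t + A + t B with A = y - p 0 and B chosen so that
   it ends at z stays in that tube with |B| <= m, hence it solves the
   ebar-inflated inclusion; appending it to the solution reaching y and
   extending to a maximal solution (Zorn's lemma) puts z in K.  Reversing time
   gives the statements for -F. *)

Section EuclideanNorm.
Context {R : realType} {n : nat}.
Local Notation V := 'rV[R]_n.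
Implicit Types u v : V.

Let sqnorm v := \sum_(i < n) v ord0 i ^+ 2.

Let sqnorm_ge0 v : 0 <= sqnorm v.
Proof. by apply: sumr_ge0 => i _; rewrite sqr_ge0. Qed.

Let sqnorm_eq0 v : sqnorm v = 0 -> forall i, v ord0 i = 0.
Proof.
move=> /eqP; rewrite psumr_eq0 => [/allP H i|i _]; last by rewrite sqr_ge0.
by have /(_ (mem_index_enum i)) := H i; rewrite implyTb sqrf_eq0 => /eqP.
Qed.

Lemma enorm_ge0 v : 0 <= enorm v.
Proof. exact: sqrtr_ge0. Qed.

Let enorm_sqr v : enorm v ^+ 2 = sqnorm v.
Proof. by rewrite /enorm sqr_sqrtr // sqnorm_ge0. Qed.

Lemma enormZ a v : enorm (a *: v) = `|a| * enorm v.
Proof.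
rewrite /enorm -/(sqnorm _) -/(sqnorm v).
have -> : sqnorm (a *: v) = a ^+ 2 * sqnorm v.
  by rewrite /sqnorm mulr_sumr; apply: eq_bigr => i _; rewrite mxE; ring.
by rewrite sqrtrM ?sqr_ge0 // sqrtr_sqr.
Qed.

Lemma enormN v : enorm (- v) = enorm v.
Proof. by rewrite -scaleN1r enormZ normrN normr1 mul1r. Qed.

Lemma enorm0 : enorm (0 : V) = 0.
Proof. by rewrite -(scale0r (0 : V)) enormZ normr0 mul0r. Qed.

Let enorm_gt0 v : sqnorm v != 0 -> 0 < enorm v.
Proof.
move=> v0; rewrite lt_neqAle enorm_ge0 andbT eq_sym /enorm sqrtr_eq0 -ltNge.
by rewrite lt_neqAle eq_sym v0 sqnorm_ge0.
Qed.

Lemma dot_le_enorm u v : \sum_(i < n) u ord0 i * v ord0 i <= enorm u * enorm v.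
Proof.
have [u0|u0] := eqVneq (sqnorm u) 0.
  under eq_bigr => i _ do rewrite (sqnorm_eq0 _ u0) mul0r.
  by rewrite big1 // mulr_ge0 // enorm_ge0.
have [v0|v0] := eqVneq (sqnorm v) 0.
  under eq_bigr => i _ do rewrite (sqnorm_eq0 _ v0) mulr0.
  by rewrite big1 // mulr_ge0 // enorm_ge0.
set a := enorm u; set b := enorm v.
have a0 : 0 < a by exact: enorm_gt0.
have b0 : 0 < b by exact: enorm_gt0.
have : 0 <= \sum_(i < n) (b * u ord0 i - a * v ord0 i) ^+ 2.
  by apply: sumr_ge0 => i _; rewrite sqr_ge0.
have -> : \sum_(i < n) (b * u ord0 i - a * v ord0 i) ^+ 2 =
    b ^+ 2 * sqnorm u - 2 * a * b * (\sum_(i < n) u ord0 i * v ord0 i)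
    + a ^+ 2 * sqnorm v.
  rewrite /sqnorm !mulr_sumr -sumrB -big_split /=.
  by apply: eq_bigr => i _; ring.
rewrite -(enorm_sqr u) -(enorm_sqr v) -/a -/b => H.
have : 2 * a * b * (\sum_(i < n) u ord0 i * v ord0 i) <= 2 * a * b * (a * b).
  by lra.
by rewrite ler_pM2l // !mulr_gt0.
Qed.

Lemma enormD u v : enorm (u + v) <= enorm u + enorm v.
Proof.
rewrite -(@ler_pXn2r _ 2) ?nnegrE ?addr_ge0 ?enorm_ge0 // enorm_sqr.
have -> : sqnorm (u + v) =
    sqnorm u + sqnorm v + 2 * \sum_(i < n) u ord0 i * v ord0 i.
  rewrite /sqnorm mulr_sumr -!big_split /=.
  by apply: eq_bigr => i _; rewrite mxE; ring.
have := dot_le_enorm u v; rewrite -(enorm_sqr u) -(enorm_sqr v); nra.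
Qed.

Lemma enormB u v : enorm (u - v) <= enorm u + enorm v.
Proof. by rewrite (le_trans (enormD _ _)) // enormN. Qed.

Lemma enorm_distD u v w : enorm (u - w) <= enorm (u - v) + enorm (v - w).
Proof.
have -> : u - w = (u - v) + (v - w) by rewrite addrA subrK.
exact: enormD.
Qed.

Lemma mxnorm_le_enorm v : `|v| <= enorm v.
Proof.
rewrite /Num.norm /= mx_normrE; apply: bigmax_le; first exact: enorm_ge0.
move=> [i j] _ /=; rewrite (ord1 i) -sqrtr_sqr ler_wsqrtr // /sqnorm.
by rewrite (bigD1 j) //= lerDl; apply: sumr_ge0 => k _; rewrite sqr_ge0.
Qed.

Lemma enorm_le_mxnorm v : enorm v <= n%:R * `|v|.
Proof.
have coord_le i : `|v ord0 i| <= `|v|.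
  rewrite /Num.norm /= mx_normrE.
  exact: (le_bigmax 0 (fun ij : 'I_1 * 'I_n => `|v ij.1 ij.2|) (ord0, i)).
rewrite -(@ler_pXn2r _ 2) ?nnegrE ?enorm_ge0 ?mulr_ge0 // enorm_sqr.
apply: (@le_trans _ _ (\sum_(i < n) `|v| ^+ 2)).
  apply: ler_sum => i _; rewrite -real_normK ?num_real //.
  by rewrite lerXn2r ?nnegrE.
rewrite sumr_const card_ord -mulr_natl exprMn.
have : (n%:R : R) <= n%:R ^+ 2.
  by case: n => [|k]; rewrite ?expr0n // expr2 -natrM ler_nat leq_pmull.
have := sqr_ge0 `|v|; nra.
Qed.

Lemma nbhs_enorm_ball (x : V) r : 0 < r -> nbhs x [set y | enorm (y - x) < r].
Proof.
move=> r0; apply/nbhs_ballP.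
have n1 : 0 < n.+1%:R :> R by rewrite ltr0n.
exists (r / n.+1%:R); first exact: divr_gt0.
move=> y; rewrite -ball_normE /= -normrN opprB => hy.
apply: (le_lt_trans (enorm_le_mxnorm _)).
apply: (@le_lt_trans _ _ (n.+1%:R * `|y - x|)); last by rewrite mulrC -ltr_pdivlMr.
by apply: ler_wpM2r => //; rewrite ler_nat.
Qed.

Lemma nbhs_enormP (x : V) (A : set V) : nbhs x A ->
  exists2 r, 0 < r & forall y, enorm (y - x) < r -> A y.
Proof.
move=> /nbhs_ballP [e e0 H]; exists e => // y hy; apply: H.
by rewrite -ball_normE /= -normrN opprB (le_lt_trans (mxnorm_le_enorm _) hy).
Qed.

Lemma open_enorm_ball (c : V) r : open [set v | enorm (v - c) < r].
Proof.
move=> v /= hv; have h0 : 0 < r - enorm (v - c) by rewrite subr_gt0.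
apply: filterS (nbhs_enorm_ball v _ h0) => y /= hy.
by apply: le_lt_trans (enorm_distD y v c) _; lra.
Qed.

End EuclideanNorm.

Section NegligibleAffine.
Context {R : realType}.
Local Notation l := (@wlength R idfun).
Local Notation mu := (@lebesgue_measure R).

Let wlength_itv_oo_eq (a b a' b' : R) : b - a = b' - a' ->
  l `]a, b[%classic = l `]a', b'[%classic.
Proof.
move=> e; have [ab|ba] := leP a b.
  have a'b' : a' <= b' by rewrite -subr_ge0 -e subr_ge0.
  by rewrite !wlength_itv_bnd //= e.
have b'a' : b' < a' by rewrite -subr_lt0 -e subr_lt0.
have -> : `]a, b[%classic = set0 :> set R.
  by apply/seteqP; split => x //=; rewrite in_itv /= => /andP[]; lra.
have -> : `]a', b'[%classic = set0 :> set R.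
  by apply/seteqP; split => x //=; rewrite in_itv /= => /andP[]; lra.
by [].
Qed.

Let affine_preimage_itv (a b c s : R) : (s = 1 \/ s = -1) ->
  exists a' b', [set t | `]a, b[%classic (c + s * t)] = `]a', b'[%classic /\
                b' - a' = b - a.
Proof.
case=> ->.
- exists (a - c), (b - c); split; last by ring.
  by apply/seteqP; split => x /=; rewrite !in_itv /= => /andP[h1 h2];
    apply/andP; split; lra.
- exists (c - b), (c - a); split; last by ring.
  by apply/seteqP; split => x /=; rewrite !in_itv /= => /andP[h1 h2];
    apply/andP; split; lra.
Qed.

Lemma negligible_affine_preimage (N : set R) (c s : R) : (s = 1 \/ s = -1) ->
  mu.-negligible N -> mu.-negligible [set t | N (c + s * t)].
Proof.
move=> hs /negligible_outer_measure N0; apply/negligible_outer_measure.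
apply/eqP; rewrite eq_le outer_measure_ge0 andbT -N0.
rewrite !outer_measure_open_itv_cover.
apply: ereal_inf_le_tmp => _ [I [Iitv NI] <-].
exists (fun k => [set t | I k (c + s * t)]).
  split; last by move=> t /= /NI.
  move=> k; have [[a b] /= ->] := Iitv k.
  have [a' [b' [-> _]]] := affine_preimage_itv a b c s hs.
  by exists (a', b').
apply: eq_eseriesr => k _; have [[a b] /= ->] := Iitv k.
have [a' [b' [-> e]]] := affine_preimage_itv a b c s hs.
exact: wlength_itv_oo_eq.
Qed.

Lemma negligible_set1 (a : R) : mu.-negligible [set a].
Proof.
by apply/negligibleP; [exact: measurable_set1|exact: lebesgue_measure_set1].
Qed.

Lemma negligible_subsingleton (S : set R) :
  (forall x y, S x -> S y -> x = y) -> mu.-negligible S.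
Proof.
move=> h; have [[x Sx]|S0] := pselect (S !=set0).
  by apply: negligibleS (negligible_set1 x) => y Sy; rewrite /= (h y x).
have -> : S = set0 by apply/seteqP; split => y // Sy; apply: S0; exists y.
exact: negligible_set0.
Qed.

End NegligibleAffine.

Section AffineDerivatives.
Context {R : realType} {n : nat}.
Local Notation V := 'rV[R]_n.

Let affine_funE (c s : R) : (fun t : R => c + s * t) = cst c + s \*: id.
Proof. by apply/funext. Qed.

Let derivable_affine (c s t : R) : derivable (fun t : R => c + s * t) t 1.
Proof.
rewrite affine_funE; apply: derivableD; first exact: derivable_cst.
by apply: derivableZ; exact: derivable_id.
Qed.

Lemma derive_comp_affine (phi : R -> V) (c s t : R) :
  derivable phi (c + s * t) 1 ->
  derivable (fun t => phi (c + s * t)) t 1 /\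
  'D_1 (fun t => phi (c + s * t)) t = s *: 'D_1 phi (c + s * t).
Proof.
move=> /derivable1_diffP dphi.
have da : differentiable (fun t : R => c + s * t) t.
  by apply/derivable1_diffP; exact: derivable_affine.
have dq : differentiable (phi \o (fun t : R => c + s * t)) t.
  exact: differentiable_comp.
split; first exact/derivable1_diffP.
rewrite deriveE // diff_comp // /= [in RHS]deriveE //.
have -> : 'd (fun t : R => c + s * t) t 1 = s.
  rewrite -deriveE // affine_funE deriveD; last 2 first.
  - exact: derivable_cst.
  - by apply: derivableZ; exact: derivable_id.
  rewrite derive_cst deriveZ; last exact: derivable_id.
  by rewrite derive_id add0r [_%:A]mulr1.
by rewrite -linearZ /= [_ *: _]mulr1.
Qed.

Lemma derive_add_affine (p : R -> V) (A B : V) t : derivable p t 1 ->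
  derivable (fun t => p t + A + t *: B) t 1 /\
  'D_1 (fun t => p t + A + t *: B) t = 'D_1 p t + B.
Proof.
move=> dp.
have dB : differentiable (fun k : R => k *: B) t.
  exact: (@ex_diff _ _ _ _ _ _ _ (@is_diff_scalel _ _ t B)).
have /derivable1_diffP dB' := dB.
have dpA : derivable (p + cst A) t 1 := derivableD dp (derivable_cst A t 1).
rewrite (_ : (fun t => p t + A + t *: B) = (p + cst A) + (fun k : R => k *: B));
  last by apply/funext.
split; first exact: derivableD.
rewrite (deriveD dpA dB') (deriveD dp (derivable_cst A t 1)) derive_cst addr0.
congr (_ + _); rewrite (deriveE _ dB).
by rewrite (@diff_val _ _ _ _ _ _ _ (@is_diff_scalel _ _ t B)) scale1r.
Qed.

End AffineDerivatives.

Section AbsCont.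
Context {R : realType} {n : nat}.
Local Notation V := 'rV[R]_n.
Implicit Types (a b c : R) (phi psi : R -> V).

Lemma eq_abs_cont_on {a b phi psi} : abs_cont_on a b phi ->
  (forall t, a <= t <= b -> phi t = psi t) -> abs_cont_on a b psi.
Proof.
move=> ac E e e0; have [d d0 H] := ac e e0; exists d => // m s t st dj sm.
have E' k : psi (t k) - psi (s k) = phi (t k) - phi (s k).
  by have [h1 [h2 h3]] := st k; rewrite !E //; apply/andP; split => //; lra.
under eq_bigr => k _ do rewrite E'.
exact: H.
Qed.

Lemma abs_cont_on_sub {a b a' b' phi} : abs_cont_on a b phi -> a <= a' -> b' <= b ->
  abs_cont_on a' b' phi.
Proof.
move=> ac ha hb e e0; have [d d0 H] := ac e e0; exists d => // m s t st dj sm.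
by apply: H => // k; have [h1 [h2 h3]] := st k; split; [lra|split; lra].
Qed.

Lemma abs_cont_on_shift a b c phi : abs_cont_on a b phi ->
  abs_cont_on (a - c) (b - c) (fun t => phi (c + t)).
Proof.
move=> ac e e0; have [d d0 H] := ac e e0; exists d => // m s t st dj sm.
apply: (H m (fun k => c + s k) (fun k => c + t k)).
- by move=> k; have [h1 [h2 h3]] := st k; split; [lra|split; lra].
- by move=> k l kl; have := dj k l kl; lra.
- by under eq_bigr => k _ do rewrite opprD addrACA subrr add0r.
Qed.

Lemma abs_cont_on_reflect a b c phi : abs_cont_on a b phi ->
  abs_cont_on (c - b) (c - a) (fun t => phi (c - t)).
Proof.
move=> ac e e0; have [d d0 H] := ac e e0; exists d => // m s t st dj sm.
under eq_bigr => k _ do rewrite -enormN opprB.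
apply: (H m (fun k => c - t k) (fun k => c - s k)).
- by move=> k; have [h1 [h2 h3]] := st k; split; [lra|split; lra].
- by move=> k l kl; have := dj k l kl; lra.
- by under eq_bigr => k _ do rewrite opprB addrC addrA subrK.
Qed.

(* Cut every interval [s_k, t_k] at m, using the clamps min(., m), max(., m). *)
Lemma abs_cont_on_concat {a b m phi} : a <= m -> m <= b ->
  abs_cont_on a m phi -> abs_cont_on m b phi -> abs_cont_on a b phi.
Proof.
move=> am mb ac1 ac2 e e0.
have e20 : 0 < e / 2 by rewrite divr_gt0.
have [d1 d10 H1] := ac1 _ e20; have [d2 d20 H2] := ac2 _ e20.
exists (Num.min d1 d2); first by rewrite lt_min d10 d20.
move=> k s t st dj sm.
have dd1 : Num.min d1 d2 <= d1 by rewrite ge_min lexx.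
have dd2 : Num.min d1 d2 <= d2 by rewrite ge_min lexx orbT.
pose lo x := Num.min x m; pose hi x := Num.max x m.
have lo_mono x y : x <= y -> lo x <= lo y by move=> xy; exact: le_min2.
have hi_mono x y : x <= y -> hi x <= hi y by move=> xy; exact: le_max2.
have lo_len : \sum_(i < k) (lo (t i) - lo (s i)) <= \sum_(i < k) (t i - s i).
  apply: ler_sum => i _; have [h1 [h2 h3]] := st i; rewrite /lo.
  by have [tm|mt] := leP (t i) m; have [sm'|ms] := leP (s i) m; lra.
have hi_len : \sum_(i < k) (hi (t i) - hi (s i)) <= \sum_(i < k) (t i - s i).
  apply: ler_sum => i _; have [h1 [h2 h3]] := st i; rewrite /hi.
  by have [tm|mt] := leP (t i) m; have [sm'|ms] := leP (s i) m; lra.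
have Hlo : \sum_(i < k) enorm (phi (lo (t i)) - phi (lo (s i))) < e / 2.
  apply: (H1 k (lo \o s) (lo \o t)); last by rewrite /=; lra.
  - move=> i; have [h1 [h2 h3]] := st i; rewrite /= /lo.
    split; first by rewrite le_min h1 am.
    by split; [exact: le_min2|rewrite ge_min lexx orbT].
  - by move=> i j ij; case: (dj i j ij) => h; [left|right]; exact: lo_mono.
have Hhi : \sum_(i < k) enorm (phi (hi (t i)) - phi (hi (s i))) < e / 2.
  apply: (H2 k (hi \o s) (hi \o t)); last by rewrite /=; lra.
  - move=> i; have [h1 [h2 h3]] := st i; rewrite /= /hi.
    split; first by rewrite le_max lexx orbT.
    by split; [exact: le_max2|rewrite ge_max h3 mb].
  - by move=> i j ij; case: (dj i j ij) => h; [left|right]; exact: hi_mono.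
rewrite [e]splitr; apply: le_lt_trans (ltrD Hlo Hhi).
rewrite -big_split; apply: ler_sum => i _ /=; have [h1 [h2 h3]] := st i.
rewrite /lo /hi; have [tm|mt] := leP (t i) m; have [sm'|ms] := leP (s i) m.
- by rewrite subrr enorm0 addr0.
- lra.
- by rewrite addrC enorm_distD.
- by rewrite subrr enorm0 add0r.
Qed.

Lemma abs_cont_on_add_affine a b phi (A B : V) : abs_cont_on a b phi ->
  abs_cont_on a b (fun t => phi t + A + t *: B).
Proof.
move=> ac e e0.
have e20 : 0 < e / 2 by rewrite divr_gt0.
have [d1 d10 H1] := ac _ e20.
have hB : 0 < enorm B + 1 by rewrite ltr_wpDl ?enorm_ge0.
pose d2 := e / 2 / (enorm B + 1).
have d20 : 0 < d2 by rewrite divr_gt0.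
exists (Num.min d1 d2); first by rewrite lt_min d10 d20.
move=> k s t st dj sm.
have m1 : Num.min d1 d2 <= d1 by rewrite ge_min lexx.
have m2 : Num.min d1 d2 <= d2 by rewrite ge_min lexx orbT.
have H := H1 k s t st dj ltac:(lra).
have len0 : 0 <= \sum_(i < k) (t i - s i).
  by apply: sumr_ge0 => i _; have [h1 [h2 h3]] := st i; lra.
have hs : (\sum_(i < k) (t i - s i)) * enorm B <= e / 2.
  apply: (@le_trans _ _ (d2 * (enorm B + 1))); first by have := enorm_ge0 B; nra.
  by rewrite /d2 divfK // gt_eqF.
apply: (@le_lt_trans _ _ (\sum_(i < k) enorm (phi (t i) - phi (s i)) +
    (\sum_(i < k) (t i - s i)) * enorm B)); last by lra.
rewrite mulr_suml -big_split; apply: ler_sum => i _ /=; have [h1 [h2 h3]] := st i.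
have -> : phi (t i) + A + t i *: B - (phi (s i) + A + s i *: B) =
    (phi (t i) - phi (s i)) + (t i - s i) *: B.
  by apply/matrixP => ? ?; rewrite !mxE; ring.
by apply: (le_trans (enormD _ _)); rewrite enormZ ger0_norm //; lra.
Qed.

Lemma abs_cont_on_cont {a b phi} : abs_cont_on a b phi -> forall x, a <= x <= b ->
  forall e, 0 < e -> exists2 d, 0 < d & forall y, a <= y <= b -> `|y - x| < d ->
    enorm (phi y - phi x) < e.
Proof.
move=> ac x /andP[ax xb] e e0; have [d d0 H] := ac e e0.
exists d => // y /andP[ay yb] yx.
have := H 1%N (fun _ => Num.min x y) (fun _ => Num.max x y).
rewrite !big_ord1 /=; have [xy|yx'] := leP x y => HH.
  apply: HH; [by move=> k; split; lra|by move=> k l; rewrite !ord1 eqxx|].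
  by move: yx; rewrite ger0_norm ?subr_ge0.
rewrite -enormN opprB.
apply: HH; [by move=> k; split; lra|by move=> k l; rewrite !ord1 eqxx|].
by move: yx; rewrite ltr0_norm ?subr_lt0 // opprB.
Qed.

End AbsCont.

Section Excess.
Context {R : realType} {n : nat}.
Local Notation V := 'rV[R]_n.
Implicit Types (A B C : set V) (F : V -> set V).

Definition excess_lt (m : R) A B :=
  forall v, A v -> exists2 w, B w & enorm (v - w) < m.

Lemma excess_lt_trans (m1 m2 : R) A B C :
  excess_lt m1 A B -> excess_lt m2 B C -> excess_lt (m1 + m2) A C.
Proof.
move=> AB BC v Av; have [w Bw vw] := AB v Av; have [u Cu wu] := BC w Bw.
by exists u => //; apply: le_lt_trans (enorm_distD v w u) _; rewrite ltrD.
Qed.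

Lemma usc_excess {F} : usc F -> forall x0 (m : R), 0 < m ->
  \forall x \near x0, excess_lt m (F x) (F x0).
Proof.
move=> hu x0 m m0; pose U := [set v | exists2 w, F x0 w & enorm (v - w) < m].
have oU : open U.
  move=> v [w Fw hv]; have h0 : 0 < m - enorm (v - w) by rewrite subr_gt0.
  apply: filterS (nbhs_enorm_ball v _ h0) => y /= hy; exists w => //.
  by apply: le_lt_trans (enorm_distD y v w) _; lra.
have FU : F x0 `<=` U by move=> w Fw; exists w => //; rewrite subrr enorm0.
by apply: filterS (hu x0 U oU FU) => x FxU v /FxU.
Qed.

(* Lower semicontinuity gives this near each point of F x0; compactness of F x0
   makes it uniform. *)
Lemma lsc_excess {F} : lsc F -> forall x0 (m : R), compact (F x0) -> 0 < m ->
  \forall q \near x0, excess_lt m (F x0) (F q).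
Proof.
move=> hl x0 m cF m0; have m20 : 0 < m / 2 by rewrite divr_gt0.
pose P (q w : V) := exists2 v, F q v & enorm (w - v) < m.
have : \forall q \near x0, F x0 `<=` P q.
  apply: (iffLR (compact_near_coveringP (F x0)) cF V (nbhs x0) P) => w0 Fw0.
  pose Bw0 := [set v | enorm (v - w0) < m / 2].
  have lb : \forall q \near x0, F q `&` Bw0 !=set0.
    apply: hl (open_enorm_ball w0 (m / 2)) _.
    by exists w0; split => //; rewrite /Bw0 /= subrr enorm0.
  exists (Bw0, [set q | F q `&` Bw0 !=set0]).
    by split => //; exact: nbhs_enorm_ball.
  move=> [w q] /= [hw [v [Fv hv]]]; exists v => //.
  apply: le_lt_trans (enorm_distD w w0 v) _.
  by rewrite -[enorm (w0 - v)]enormN opprB; move: hw hv; rewrite /Bw0 /=; lra.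
by apply: filterS => q FP w /FP.
Qed.

Lemma continuous_excess {F} : usc F -> lsc F -> (forall x, compact (F x)) ->
  forall x0 (m : R), 0 < m ->
  exists2 r, 0 < r & forall x q, enorm (x - x0) < r -> enorm (q - x0) < r ->
    excess_lt m (F x) (F q).
Proof.
move=> hu hl hc x0 m m0; have m20 : 0 < m / 2 by rewrite divr_gt0.
have [r1 r10 H1] := nbhs_enormP _ _ (usc_excess hu x0 _ m20).
have [r2 r20 H2] := nbhs_enormP _ _ (lsc_excess hl x0 _ (hc x0) m20).
exists (Num.min r1 r2); first by rewrite lt_min r10 r20.
move=> x q; rewrite !lt_min => /andP[hx _] /andP[_ hq].
by rewrite [m]splitr; apply: excess_lt_trans (H1 x hx) (H2 q hq).
Qed.

End Excess.

Section Tube.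
Context {R : realType} {n : nat}.
Local Notation V := 'rV[R]_n.

Let nbhs_normP (x : R) (A : set R) : nbhs x A ->
  exists2 r, 0 < r & forall y, `|y - x| < r -> A y.
Proof.
move=> /nbhs_ballP [e e0 H]; exists e => // y hy; apply: H.
by rewrite -ball_normE /= -normrN opprB.
Qed.

Let nbhs_norm_ball (x r : R) : 0 < r -> nbhs x [set y | `|y - x| < r].
Proof.
move=> r0; apply/nbhs_ballP; exists r => // y; rewrite -ball_normE /=.
by rewrite -normrN opprB.
Qed.

Let near0_exists_pos (Q : R -> Prop) : (\forall x \near 0, Q x) ->
  exists2 x, 0 < x & Q x.
Proof.
move=> /nbhs_normP [r r0 H]; exists (r / 2); first by rewrite divr_gt0.
by apply: H; rewrite subr0 gtr0_norm ?divr_gt0 //; lra.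
Qed.

Let uniform_param (L : R) (P : R -> R -> Prop) :
  (forall t0, 0 <= t0 <= L -> exists2 d, 0 < d &
     forall t mu, 0 <= t <= L -> `|t - t0| < d -> `|mu| < d -> P mu t) ->
  exists2 mu, 0 < mu & forall t, 0 <= t <= L -> P mu t.
Proof.
move=> loc.
have cov := (near_covering_withinP _).2 ((compact_near_coveringP _).1
  (@segment_compact R 0 L)) R (nbhs (0 : R)) P _.
have [|mu mu0 Hmu] := near0_exists_pos _ (cov _ _).
  move=> t0; rewrite /= in_itv /= => /loc[d d0 Hd].
  exists ([set t | `|t - t0| < d], [set mu | `|mu - 0| < d]).
    by split; exact: nbhs_norm_ball.
  by move=> [t mu] /= [ht hmu]; rewrite in_itv /= subr0 in hmu * => htL; exact: Hd.
by exists mu => // t ht; apply: Hmu; rewrite /= in_itv.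
Qed.

Lemma continuous_enorm_ball (f : V -> R) (x : V) (e : R) : continuous f -> 0 < e ->
  exists2 r, 0 < r & forall y, enorm (y - x) < r -> `|f y - f x| < e.
Proof.
move=> cf e0; have /nbhs_enormP [r r0 H] := cf x _ (nbhs_norm_ball _ _ e0).
by exists r.
Qed.

Definition enorm_cont_on (L : R) (p : R -> V) := forall t, 0 <= t <= L ->
  forall e, 0 < e -> exists2 d, 0 < d &
    forall t', 0 <= t' <= L -> `|t' - t| < d -> enorm (p t' - p t) < e.

Lemma enorm_cont_on_pos_lower_bound {L : R} {p : R -> V} (g : V -> R) :
  continuous g -> (forall x, 0 < g x) -> enorm_cont_on L p ->
  exists2 m, 0 < m & forall t, 0 <= t <= L -> m <= g (p t).
Proof.
move=> cg gpos pc; apply: (uniform_param L (fun m t => m <= g (p t))) => t0 ht0.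
have g20 : 0 < g (p t0) / 2 by rewrite divr_gt0.
have [r r0 Hr] := continuous_enorm_ball _ (p t0) _ cg g20.
have [d d0 Hd] := pc t0 ht0 r r0.
exists (Num.min d (g (p t0) / 2)); first by rewrite lt_min d0 g20.
move=> t mu htL; rewrite !lt_min => /andP[htd _] /andP[_ hmu].
have := Hr _ (Hd t htL htd); have := ler_norm mu; rewrite ltr_norml; lra.
Qed.

Definition robust_tube (F : V -> set V) (eps ebar : V -> R) (L : R) (p : R -> V)
    (m eta : R) :=
  forall t, 0 <= t <= L -> forall q, enorm (q - p t) < eta ->
    excess_lt m (F (p t)) (F q) /\ eps (p t) + 2 * m <= ebar q.

(* The margin 4 m pays for the 2 m required by the tube plus an oscillation of
   m of each of eps and ebar around a point of the path. *)
Lemma robust_tube_exists {F : V -> set V} {eps ebar : V -> R} {L : R} {p : R -> V}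
    {m : R} :
  usc F -> lsc F -> (forall x, compact (F x)) ->
  continuous eps -> continuous ebar -> enorm_cont_on L p -> 0 < m ->
  (forall t, 0 <= t <= L -> 4 * m <= ebar (p t) - eps (p t)) ->
  exists2 eta, 0 < eta & robust_tube F eps ebar L p m eta.
Proof.
move=> hu hl hc ce cb pc m0 hm.
apply: (uniform_param L (fun eta t => forall q, enorm (q - p t) < eta ->
   excess_lt m (F (p t)) (F q) /\ eps (p t) + 2 * m <= ebar q)) => t0 ht0.
have [r r0 Hr] := continuous_excess hu hl hc (p t0) _ m0.
have [r1 r10 H1] := continuous_enorm_ball _ (p t0) _ cb m0.
have [r2 r20 H2] := continuous_enorm_ball _ (p t0) _ ce m0.
pose s := Num.min r (Num.min r1 r2) / 2.
have s0 : 0 < s by rewrite divr_gt0 // !lt_min r0 r10 r20.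
have [sr sr1 sr2] : [/\ 2 * s <= r, 2 * s <= r1 & 2 * s <= r2].
  by rewrite /s mulrC divfK ?pnatr_eq0 // !ge_min !lexx !orbT.
have [d d0 Hd] := pc t0 ht0 s s0.
exists (Num.min d s); first by rewrite lt_min d0 s0.
move=> t eta htL; rewrite !lt_min => /andP[htd _] /andP[_ heta] q hq.
have hpt := Hd t htL htd.
have hq0 : enorm (q - p t0) < 2 * s.
  apply: le_lt_trans (enorm_distD q (p t) (p t0)) _.
  by have := ler_norm eta; lra.
split; first by apply: Hr; lra.
have := H1 q ltac:(lra); have := H2 (p t) ltac:(lra); have := hm t0 ht0.
rewrite !ltr_norml; lra.
Qed.

End Tube.

Section SolutionPieces.
Context {R : realType} {n : nat}.
Local Notation V := 'rV[R]_n.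
Local Notation mu := (@lebesgue_measure R).
Implicit Types (G : V -> set V) (D : set R) (phi p : R -> V).

Lemma ae_negligibleE (P : R -> Prop) :
  {ae mu, forall t, P t} = mu.-negligible (~` [set t | P t]).
Proof. by []. Qed.

Definition solves_at G phi t := derivable phi t 1 /\ G (phi t) ('D_1 phi t).

Definition solution_on G (L : R) p :=
  [/\ 0 < L, abs_cont_on 0 L p & {ae mu, forall t, 0 < t < L -> solves_at G p t}].

Lemma solves_at_near G phi psi t :
  (\forall x \near t, phi x = psi x) -> solves_at G phi t -> solves_at G psi t.
Proof.
move=> e [d1 d2]; have et : phi t = psi t := nbhs_singleton e.
split; first exact: near_eq_derivable e d1.
by rewrite -et -(@near_eq_derive _ _ _ phi psi t 1 e).
Qed.

Lemma solution_on_mono {G1 G2 L p} : (forall x v, G1 x v -> G2 x v) ->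
  solution_on G1 L p -> solution_on G2 L p.
Proof.
move=> h [L0 ac ae]; split => //; rewrite ae_negligibleE in ae *.
apply: negligibleS ae => t /= nh hg; apply: nh => ht.
by have [d g] := hg ht; split => //; exact: h.
Qed.

Lemma is_solution_itv {G D phi a b} : is_solution G D phi -> D a -> D b ->
  forall t, a <= t <= b -> D t.
Proof. by case=> Di _ _ _ Da Db t ht; apply: (Di a b). Qed.

Lemma solution_on_shift {G D phi a b} : is_solution G D phi -> D a -> D b -> a < b ->
  solution_on G (b - a) (fun t => phi (a + t)).
Proof.
move=> sol Da Db ab; have sub := is_solution_itv sol Da Db.
case: (sol) => _ _ hac hae; split; first by rewrite subr_gt0.
  by have := abs_cont_on_shift _ _ a _ (hac a b (ltW ab) sub); rewrite subrr.
rewrite ae_negligibleE in hae *.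
apply: negligibleS (negligible_affine_preimage _ a 1 (or_introl erefl) hae).
move=> t /= nh hg; apply: nh => ht.
have [d1 d2] := hg (sub (a + 1 * t) ltac:(rewrite mul1r; lra)).
have [d3 d4] := derive_comp_affine phi a 1 t d1.
have E : (fun t => phi (a + 1 * t)) = (fun t => phi (a + t)).
  by apply/funext => x; rewrite mul1r.
rewrite E in d3 d4; rewrite mul1r in d2 d4; split => //.
by rewrite d4 scale1r.
Qed.

Lemma solution_on_reverse {G D phi a b} : is_solution G D phi -> D a -> D b -> a < b ->
  solution_on (fun x v => G x (- v)) (b - a) (fun t => phi (b - t)).
Proof.
move=> sol Da Db ab; have sub := is_solution_itv sol Da Db.
case: (sol) => _ _ hac hae; split; first by rewrite subr_gt0.
  by have := abs_cont_on_reflect _ _ b _ (hac a b (ltW ab) sub); rewrite subrr.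
rewrite ae_negligibleE in hae *.
apply: negligibleS (negligible_affine_preimage _ b (-1) (or_intror erefl) hae).
move=> t /= nh hg; apply: nh => ht.
have [d1 d2] := hg (sub (b + -1 * t) ltac:(rewrite mulN1r; lra)).
have [d3 d4] := derive_comp_affine phi b (-1) t d1.
have E : (fun t => phi (b + -1 * t)) = (fun t => phi (b - t)).
  by apply/funext => x; rewrite mulN1r.
rewrite E in d3 d4; rewrite mulN1r in d2 d4; split => //.
by rewrite d4 scaleN1r opprK.
Qed.

End SolutionPieces.

Section Concat.
Context {R : realType} {n : nat}.
Local Notation V := 'rV[R]_n.
Local Notation mu := (@lebesgue_measure R).

Variables (G : V -> set V) (D : set R) (psi chi : R -> V) (s L : R).
Hypotheses (sol : is_solution G D psi) (Ds : D s) (s_ge0 : 0 <= s)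
  (chi_sol : solution_on G L chi) (chi0 : chi 0 = psi s).

Definition concat_dom := [set t | (D t /\ t <= s) \/ (s <= t <= s + L)].
Definition concat_fun t := if t <= s then psi t else chi (t - s).

Let L_gt0 : 0 < L. Proof. by case: chi_sol. Qed.

Let concat_dom_left {t} : concat_dom t -> t <= s -> D t.
Proof. by move=> [[]//|/andP[h1 h2]] ts; have -> : t = s by lra. Qed.

Let concat_dom_right {t} : concat_dom t -> s <= t -> t <= s + L.
Proof. by move=> [[_ h]|/andP[h1 h2]] st //; have := L_gt0; lra. Qed.

Let concat_funL t : t <= s -> concat_fun t = psi t.
Proof. by move=> ts; rewrite /concat_fun ts. Qed.

Let concat_funR t : s <= t -> concat_fun t = chi (- s + t).
Proof.
move=> st; rewrite /concat_fun; case: ifP => ts; last by rewrite addrC.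
have -> : t = s by lra.
by rewrite addNr chi0.
Qed.

Let concat_dom_itv : is_interval concat_dom.
Proof.
case: sol => Di _ _ _ x y Dx Dy z /andP[xz zy].
have [zs|sz] := leP z s.
  left; split => //; have Dx' : D x by apply: concat_dom_left => //; lra.
  have [ys|sy] := leP y s.
    by apply: (Di x y Dx' (concat_dom_left Dy ys)); rewrite xz zy.
  by apply: (Di x s Dx' Ds); rewrite xz zs.
by right; rewrite /= (ltW sz) /=; have := concat_dom_right Dy ltac:(lra); lra.
Qed.

Let concat_abs_cont a b : a <= b -> `[a, b] `<=` concat_dom ->
  abs_cont_on a b concat_fun.
Proof.
case: sol chi_sol => _ _ hac _ [_ acx _].
have acL a' b' : a' <= b' -> b' <= s -> `[a', b'] `<=` concat_dom ->
    abs_cont_on a' b' concat_fun.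
  move=> ab bs sub; apply: eq_abs_cont_on (hac a' b' ab _) _.
    move=> t ht; apply: concat_dom_left; first exact: sub.
    by move: ht; rewrite /= in_itv /= => /andP[_ h]; lra.
  by move=> t /andP[_ h]; rewrite concat_funL //; lra.
have acR a' b' : s <= a' -> b' <= s + L -> abs_cont_on a' b' concat_fun.
  move=> sa bL; have := abs_cont_on_shift _ _ (- s) _ acx.
  rewrite !opprK add0r => h; apply: eq_abs_cont_on (abs_cont_on_sub h sa _) _.
    by rewrite addrC.
  by move=> t /andP[h1 h2]; rewrite concat_funR //; lra.
move=> ab sub.
have [Da Db] : concat_dom a /\ concat_dom b.
  by split; apply: sub; rewrite /= in_itv /= lexx ab.
have [bs|sb] := leP b s; first exact: acL.
have bL : b <= s + L by apply: concat_dom_right => //; lra.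
have [sa|a_s] := leP s a; first exact: acR.
apply: (abs_cont_on_concat (ltW a_s) (ltW sb)); last exact: acR.
apply: acL => //; first exact: ltW.
move=> t; rewrite /= in_itv /= => /andP[h1 h2]; apply: sub.
by rewrite /= in_itv /=; apply/andP; split; lra.
Qed.

(* Off the null set {s, s + L}, concat_fun coincides near t with psi or with a
   shift of chi. *)
Let concat_solves_ae :
  {ae mu, forall t, concat_dom t -> solves_at G concat_fun t}.
Proof.
case: sol chi_sol => _ _ _ hae [_ _ aex].
rewrite ae_negligibleE in hae aex *.
have N := negligibleU (negligibleU hae (negligible_set1 s))
  (negligibleU (negligible_set1 (s + L))
    (negligible_affine_preimage _ (- s) 1 (or_introl erefl) aex)).
apply: negligibleS N => t /= nh; apply: contrapT => hn; apply: nh => Dt.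
have ts : t != s by apply/eqP => ts; apply: hn; left; right.
have tsL : t != s + L by apply/eqP => ts'; apply: hn; right; left.
have [lts|gts] := ltP t s.
  have gp : solves_at G psi t.
    apply: contrapT => ng; apply: hn; left; left.
    by move=> /(_ (concat_dom_left Dt (ltW lts))).
  apply: solves_at_near gp; apply: filterS (lt_nbhsl lts) => x xs.
  by rewrite concat_funL // ltW.
have st : s < t by rewrite lt_neqAle eq_sym ts gts.
have tL : t < s + L by rewrite lt_neqAle tsL concat_dom_right // ltW.
have [d1 d2] : solves_at G chi (- s + 1 * t).
  apply: contrapT => ng; apply: hn; right; right => /(_ _) h; apply: ng; apply: h.
  by rewrite mul1r; apply/andP; split; lra.
have [h1 h2] := derive_comp_affine chi (- s) 1 t d1.
have gq : solves_at G (fun x => chi (- s + 1 * x)) t by split => //; rewrite h2 scale1r.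
apply: solves_at_near gq; apply: filterS (lt_nbhsr st) => x xs.
by rewrite concat_funR ?mul1r // ltW.
Qed.

Lemma is_solution_concat : is_solution G concat_dom concat_fun.
Proof.
split; [exact: concat_dom_itv| |exact: concat_abs_cont|exact: concat_solves_ae].
by left; split=> //; case: sol.
Qed.

End Concat.

Arguments is_solution_concat {R n G D psi chi s L}.

Section MaximalExtension.
Context {R : realType} {n : nat}.
Local Notation V := 'rV[R]_n.
Local Notation mu := (@lebesgue_measure R).
Local Notation sol_t := (set R * (R -> V))%type.

Definition extends (p q : sol_t) := p.1 `<=` q.1 /\ forall t, p.1 t -> q.2 t = p.2 t.

Lemma extends_refl p : extends p p. Proof. by split. Qed.

Lemma extends_trans {p q r} : extends p q -> extends q r -> extends p r.
Proof.
move=> [s1 e1] [s2 e2]; split; first by move=> t /s1 /s2.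
by move=> t pt; rewrite e2 ?e1 //; exact: s1.
Qed.

Context {G : V -> set V}.

Section Chain.
Variables (A : set sol_t) (a0 : sol_t).
Hypotheses (Aa0 : A a0) (Asol : forall a, A a -> is_solution G a.1 a.2)
  (Achain : forall a b, A a -> A b -> extends a b \/ extends b a).

Definition chain_dom := [set t | exists2 a, A a & a.1 t].

Definition chain_fun t : V :=
  if pselect (exists a, A a /\ a.1 t) is left h then (proj1_sig (cid h)).2 t else 0.

Let chain_fun_agree {a} : A a -> forall t, a.1 t -> chain_fun t = a.2 t.
Proof.
move=> Aa t at_; rewrite /chain_fun; case: pselect => [h|h]; last first.
  by exfalso; apply: h; exists a.
case: cid => b /= [Ab bt].
by case: (Achain a b Aa Ab) => [[_ e]|[_ e]]; rewrite e.
Qed.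

Let chain_common {a b} : A a -> A b -> exists2 c, A c & a.1 `<=` c.1 /\ b.1 `<=` c.1.
Proof.
move=> Aa Ab; case: (Achain a b Aa Ab) => [[s _]|[s _]].
  by exists b => //; split.
by exists a => //; split.
Qed.

Let chain_dom_itv : is_interval chain_dom.
Proof.
move=> x y [a Aa ax] [b Ab bx] z hz.
have [c Ac [ac bc]] := chain_common Aa Ab.
exists c => //; case: (Asol c Ac) => ci _ _ _.
by apply: (ci x y); [exact: ac|exact: bc|].
Qed.

Let chain_abs_cont a b : a <= b -> `[a, b] `<=` chain_dom ->
  abs_cont_on a b chain_fun.
Proof.
move=> ab sub.
have [c1 Ac1 c1a] : chain_dom a by apply: sub; rewrite /= in_itv /= lexx ab.
have [c2 Ac2 c2b] : chain_dom b by apply: sub; rewrite /= in_itv /= lexx ab.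
have [c Ac [s1 s2]] := chain_common Ac1 Ac2.
case: (Asol c Ac) => ci _ hac _.
have subc : `[a, b] `<=` c.1.
  by move=> t; rewrite /= in_itv /= => ht; apply: (ci a b); [exact: s1|exact: s2|].
apply: eq_abs_cont_on (hac a b ab subc) _ => t ht.
by rewrite (chain_fun_agree Ac) //; apply: subc; rewrite /= in_itv /=.
Qed.

Let chain_rat_bracket {t u1 u2} : chain_dom t -> chain_dom u1 -> chain_dom u2 ->
  u1 < t -> t < u2 -> exists q : rat * rat, exists2 c, A c &
    [/\ c.1 (ratr q.1), c.1 (ratr q.2), ratr q.1 < t & t < ratr q.2].
Proof.
move=> Dt Du1 Du2 u1t tu2.
have [q1] := rat_in_itvoo u1t; have [q2] := rat_in_itvoo tu2.
rewrite !in_itv /= => /andP[a2 b2] /andP[a1 b1].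
have [c1 Ac1 c1q] : chain_dom (ratr q1).
  by apply: (chain_dom_itv _ _ Du1 Dt); rewrite (ltW a1) ltW.
have [c2 Ac2 c2q] : chain_dom (ratr q2).
  by apply: (chain_dom_itv _ _ Dt Du2); rewrite (ltW a2) ltW.
have [c Ac [s1 s2]] := chain_common Ac1 Ac2.
by exists (q1, q2); exists c => //; split => //; [exact: s1|exact: s2].
Qed.

Let chain_solves_ae :
  {ae mu, forall t, chain_dom t -> solves_at G chain_fun t}.
Proof.
rewrite ae_negligibleE.
pose bad (c : sol_t) := ~` [set t | c.1 t -> solves_at G c.2 t].
pose bad_pair (k : nat) := if @unpickle (rat * rat)%type k is Some q then
    if pselect (exists c, A c /\ c.1 (ratr q.1) /\ c.1 (ratr q.2)) is left h
    then bad (proj1_sig (cid h)) else set0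
  else set0.
have bad_pairN k : mu.-negligible (bad_pair k).
  rewrite /bad_pair; case: unpickle => [q|]; last exact: negligible_set0.
  case: pselect => [h|_]; last exact: negligible_set0.
  by case: cid => c /= [Ac _]; case: (Asol c Ac) => _ _ _; rewrite ae_negligibleE.
pose ends := [set t | chain_dom t /\ forall u, chain_dom u -> t <= u] `|`
             [set t | chain_dom t /\ forall u, chain_dom u -> u <= t].
have endsN : mu.-negligible ends.
  by apply: negligibleU; apply: negligible_subsingleton => x y [Dx hx] [Dy hy];
    apply/eqP; rewrite eq_le ?hx ?hy.
apply: negligibleS
  (negligibleU endsN (@negligible_bigcup _ _ _ mu bad_pair bad_pairN)) => t /= nh.
apply: contrapT => hn; apply: nh => Dt.
have [u1 Du1 u1t] : exists2 u1, chain_dom u1 & u1 < t.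
  apply: contrapT => h; apply: hn; left; left; split => // u Du.
  by rewrite leNgt; apply/negP => ut; apply: h; exists u.
have [u2 Du2 tu2] : exists2 u2, chain_dom u2 & t < u2.
  apply: contrapT => h; apply: hn; left; right; split => // u Du.
  by rewrite leNgt; apply/negP => ut; apply: h; exists u.
have [q [c0 Ac0 [c0q1 c0q2 q1t tq2]]] := chain_rat_bracket Dt Du1 Du2 u1t tu2.
apply: contrapT => ng; apply: hn; right; exists (pickle q); first by [].
rewrite /bad_pair pickleK; case: pselect => [h|]; last first.
  by move=> h; apply: h; exists c0.
case: cid => c /= [Ac [cq1 cq2]].
have ci : is_interval c.1 by case: (Asol c Ac).
have ct : c.1 t by apply: (ci _ _ cq1 cq2); rewrite (ltW q1t) ltW.
move=> /(_ ct) gc; apply: ng; apply: solves_at_near gc.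
apply: filterS (filterI (lt_nbhsr q1t) (lt_nbhsl tq2)) => x [x1 x2].
by rewrite (chain_fun_agree Ac) //; apply: (ci _ _ cq1 cq2); rewrite (ltW x1) ltW.
Qed.

Lemma chain_upper_bound :
  is_solution G chain_dom chain_fun /\
  forall a, A a -> extends a (chain_dom, chain_fun).
Proof.
split; last by move=> a Aa; split => [t at_|t at_]; [exists a|exact: chain_fun_agree].
split; [exact: chain_dom_itv| |exact: chain_abs_cont|exact: chain_solves_ae].
by case: (Asol a0 Aa0) => _ ? _ _; exists a0.
Qed.

End Chain.

Lemma maximal_extension {D : set R} {phi : R -> V} : is_solution G D phi ->
  exists D' phi', [/\ maximal_solution G (phi 0) D' phi', D `<=` D' &
    forall t, D t -> phi' t = phi t].
Proof.
move=> sol.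
pose T := {p : sol_t | is_solution G p.1 p.2 /\ extends (D, phi) p}.
have t0 : T by exists (D, phi); split => //; exact: extends_refl.
pose r (a b : T) := `[< extends (proj1_sig a) (proj1_sig b) >].
have [[[D' phi'] [sol' ext']] tmax] : exists t, premaximal r t.
  apply: (ZL_preorder t0).
  - by move=> a; apply/asboolP; exact: extends_refl.
  - by move=> a b c /asboolP ab /asboolP bc; apply/asboolP; exact: extends_trans ab bc.
  move=> A Atot; have [[a Aa]|A0] := pselect (A !=set0); last first.
    by exists t0 => a Aa; exfalso; apply: A0; exists a.
  pose A' := [set proj1_sig x | x in A].
  have Asol : forall c, A' c -> is_solution G c.1 c.2.
    by move=> _ [x Ax <-]; case: (proj2_sig x).
  have Achain : forall c d, A' c -> A' d -> extends c d \/ extends d c.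
    move=> _ _ [x Ax <-] [y Ay <-].
    by case: (Atot x y Ax Ay) => /asboolP h; [left|right].
  have [usol uext] := @chain_upper_bound A' _ (ex_intro2 _ _ a Aa erefl) Asol Achain.
  have ue : extends (D, phi) (chain_dom A', chain_fun A').
    by apply: extends_trans (proj2 (proj2_sig a)) (uext _ _); exists a.
  exists (exist _ (chain_dom A', chain_fun A') (conj usol ue)) => x Ax.
  by apply/asboolP; apply: uext; exists x.
have [sub' agr'] : D `<=` D' /\ forall t, D t -> phi' t = phi t := ext'.
exists D', phi'; split => //; split => //; first by rewrite agr' //; case: sol.
move=> [D'' [psi [sol'' [sub'' nsub] agr]]].
have e2 : extends (D, phi) (D'', psi) :=
  extends_trans ext' (conj sub'' agr : extends (D', phi') (D'', psi)).
have := tmax (exist _ (D'', psi) (conj sol'' e2)).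
move=> /(_ _)/asboolP; case; first by apply/asboolP; split.
by move=> h _; apply: nsub.
Qed.

End MaximalExtension.

Section Reach.
Context {R : realType} {n : nat}.
Local Notation V := 'rV[R]_n.
Implicit Types (F : V -> set V) (eps ebar : V -> R).

Lemma inflate_shift F eps ebar (x q v B : V) (m : R) :
  (forall x, 0 <= eps x) -> 0 < ebar q ->
  excess_lt m (F x) (F q) -> eps x + 2 * m <= ebar q -> enorm B <= m ->
  inflate F eps x v -> inflate F ebar q (v + B).
Proof.
move=> eps0 ebar0 FxFq hm hB [y Fy [b bb <-]].
have [y' Fy' yy'] := FxFq y Fy.
set c := (y - y') + eps x *: b + B.
have hc : enorm c <= ebar q.
  apply: le_trans (enormD _ _) _; apply: le_trans (lerD (enormD _ _) (lexx _)) _.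
  rewrite enormZ ger0_norm //; have bb' : enorm b <= 1 := bb.
  have := eps0 x; have := enorm_ge0 b; nra.
have ebarN0 : ebar q != 0 by rewrite gt_eqF.
exists y' => //; exists ((ebar q)^-1 *: c).
  rewrite /unit_ball /= enormZ ger0_norm; last by rewrite invr_ge0 ltW.
  by rewrite -(ler_pM2l ebar0) mulrA divff // mul1r mulr1.
rewrite scalerA divff // scale1r /c.
by apply/matrixP => ? ?; rewrite !mxE; ring.
Qed.

Lemma solution_on_perturb {F eps ebar L} {p : R -> V} {m eta : R} {A B : V} :
  (forall x, 0 <= eps x) -> (forall x, 0 < ebar x) ->
  solution_on (inflate F eps) L p -> robust_tube F eps ebar L p m eta ->
  (forall t, 0 <= t <= L -> enorm (A + t *: B) < eta) -> enorm B <= m ->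
  solution_on (inflate F ebar) L (fun t => p t + A + t *: B).
Proof.
move=> eps0 ebar0 [L0 ac ae] tube hA hB.
split => //; first exact: abs_cont_on_add_affine.
rewrite ae_negligibleE in ae *; apply: negligibleS ae => t /= nh hg; apply: nh => ht.
have [dp Fp] := hg ht.
have [dq Dq] := derive_add_affine p A B t dp.
split => //; rewrite Dq.
have ht' : 0 <= t <= L by case/andP: ht => h1 h2; apply/andP; split; lra.
have hq : enorm (p t + A + t *: B - p t) < eta.
  have -> : p t + A + t *: B - p t = A + t *: B.
    by apply/matrixP => ? ?; rewrite !mxE; ring.
  exact: hA.
have [FF hm] := tube t ht' _ hq.
exact: inflate_shift eps0 (ebar0 _) FF hm hB Fp.
Qed.

Lemma Kset_solution_on {F ebar} {Xo : set V} {L} {chi : R -> V} :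
  Kset F ebar Xo (chi 0) -> solution_on (inflate F ebar) L chi ->
  Kset F ebar Xo (chi L).
Proof.
move=> [t0 [t00 [x Xx [D [psi [[sol psi0 _] [s [Ds s0 st0 ys]]]]]]]] chi_sol.
have L0 : 0 < L by case: chi_sol.
have csol := is_solution_concat sol Ds s0 chi_sol ys.
have [D' [phi' [msol sub agr]]] := maximal_extension csol.
have DsL : concat_dom D s L (s + L) by right; rewrite lerDl (ltW L0) lexx.
have sLs : (s + L <= s) = false by apply/negbTE; rewrite -ltNge ltrDl.
have {}msol : maximal_solution (inflate F ebar) x D' phi'.
  by move: msol; rewrite /concat_fun s0 psi0.
exists (s + L); split; first lra.
exists x => //; exists D', phi'; split => //.
exists (s + L); split; [exact: sub|lra|lra|].
by rewrite agr // /concat_fun sLs addrAC subrr add0r.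
Qed.

End Reach.

Lemma affine_bridge {R : realType} {n : nat} {L rho : R} {a b : 'rV[R]_n} :
  0 < L -> enorm a < rho -> enorm b < rho ->
  L * enorm (L^-1 *: (b - a)) < 2 * rho /\
  forall t, 0 <= t <= L -> enorm (a + t *: (L^-1 *: (b - a))) < 3 * rho.
Proof.
move=> L0 ha hb; set B := L^-1 *: (b - a).
have hLB : L * enorm B < 2 * rho.
  rewrite /B enormZ ger0_norm ?invr_ge0 ?ltW // mulrA divff ?gt_eqF // mul1r.
  by apply: le_lt_trans (enormB b a) _; lra.
split => // t /andP[t0 tL]; apply: le_lt_trans (enormD _ _) _.
rewrite enormZ ger0_norm //; have := enorm_ge0 B; nra.
Qed.

Lemma interior_sub_closure (T : topologicalType) (A : set T) :
  interior A `<=` closure A.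
Proof. by move=> x /interior_subset /subset_closure. Qed.

Section Contractive.
Context {R : realType} {n : nat}.
Local Notation V := 'rV[R]_n.
Context {F : V -> set V} {Xo : set V} {ebar eps : V -> R}.
Hypotheses (hu : usc F) (hl : lsc F) (hc : forall x, compact (F x))
  (cb : continuous ebar) (ce : continuous eps)
  (ebar0 : forall x, 0 < ebar x) (eps0 : forall x, 0 <= eps x)
  (eps_lt : forall x, eps x < ebar x).
Local Notation K := (Kset F ebar Xo).

Lemma solution_on_closure_interior {L} {p : R -> V} :
  solution_on (inflate F eps) L p -> closure K (p 0) -> interior K (p L).
Proof.
move=> pok cl; have [L0 ac _] := pok.
have pc : enorm_cont_on L p := abs_cont_on_cont ac.
have cg : continuous (fun x => ebar x - eps x).
  by move=> x; apply: continuousB; [exact: cb|exact: ce].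
have [M M0 hM] := enorm_cont_on_pos_lower_bound _ cg
  (fun x => ltac:(by rewrite subr_gt0)) pc.
pose m := M / 4; have m0 : 0 < m by rewrite divr_gt0.
have hm t : 0 <= t <= L -> 4 * m <= ebar (p t) - eps (p t).
  by move=> /hM; rewrite /m mulrC divfK ?pnatr_eq0.
have [eta eta0 tube] := robust_tube_exists hu hl hc ce cb pc m0 hm.
pose rho := Num.min (eta / 3) (m * L / 2).
have rho0 : 0 < rho by rewrite lt_min !divr_gt0 // mulr_gt0.
have rho_eta : 3 * rho <= eta by rewrite mulrC -ler_pdivlMr // ge_min lexx.
have rho_m : 2 * rho <= m * L by rewrite mulrC -ler_pdivlMr // ge_min lexx orbT.
have [y [Ky /= hy]] := cl _ (nbhs_enorm_ball (p 0) _ rho0).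
apply: filterS (nbhs_enorm_ball (p L) _ rho0) => z /= hz.
have [hLB hAB] := affine_bridge L0 hy hz.
set A := y - p 0; set B := L^-1 *: (z - p L - A).
have hB : enorm B <= m by rewrite -(ler_pM2l L0) mulrC; lra.
have hA t : 0 <= t <= L -> enorm (A + t *: B) < eta.
  by move=> /hAB; lra.
have chi0 : p 0 + A + 0 *: B = y by rewrite scale0r addr0 addrC subrK.
have chiL : p L + A + L *: B = z.
  rewrite /B scalerA divff ?gt_eqF // scale1r.
  by apply/matrixP => i j; rewrite !mxE; ring.
have := Kset_solution_on (Xo := Xo) _ (solution_on_perturb eps0 ebar0 pok tube hA hB).
by rewrite /= chi0 chiL; apply.
Qed.

Lemma solution_closure_interior {D phi a b} : is_solution (inflate F eps) D phi ->
  D a -> D b -> a < b -> closure K (phi a) -> interior K (phi b).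
Proof.
move=> sol Da Db ab cla.
have := solution_on_closure_interior (solution_on_shift sol Da Db ab).
by rewrite addr0 addrC subrK; apply.
Qed.

Lemma inflate_negmap (x v : V) :
  inflate (negmap F) eps x (- v) -> inflate F eps x v.
Proof.
move=> [_ [f Ff <-] [b bb e]]; exists f => //; exists (- b).
  by rewrite /unit_ball /= enormN.
by rewrite scalerN -[v]opprK -e opprD opprK.
Qed.

Lemma negmap_solution_closure_interior {D phi a b} :
  is_solution (inflate (negmap F) eps) D phi ->
  D a -> D b -> a < b -> closure K (phi b) -> interior K (phi a).
Proof.
move=> sol Da Db ab clb.
have := solution_on_closure_interior
  (solution_on_mono (@inflate_negmap) (solution_on_reverse sol Da Db ab)).
by rewrite subr0 opprB addrC subrK; apply.
Qed.

Lemma closure_Kset_forward_contractive :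
  forward_contractive (inflate F eps) (closure K).
Proof.
split; first exact: closed_closure.
  move=> D phi sol cl0 t Dt; rewrite le_eqVlt => /predU1P[<-//|t0].
  have D0 : D 0 by case: sol.
  exact/interior_sub_closure/(solution_closure_interior sol D0 Dt t0).
move=> x0 [clx0 _] D phi [sol phi0 _]; exists 1 => // t Dt t0 _.
have D0 : D 0 by case: sol.
have : interior K (phi t).
  apply: (solution_closure_interior sol D0 Dt t0).
  by rewrite phi0; exact: closed_closure.
by apply: filterS; exact: subset_closure.
Qed.

Lemma compl_interior_Kset_forward_contractive :
  forward_contractive (inflate (negmap F) eps) (~` interior K).
Proof.
split; first exact: open_closedC (open_interior K).
  move=> D phi sol ni0 t Dt; rewrite le_eqVlt => /predU1P[<-//|t0].
  have D0 : D 0 by case: sol.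
  by move=> /interior_sub_closure /(negmap_solution_closure_interior sol D0 Dt t0).
move=> x0 [clx0 _] D phi [sol phi0 _]; exists 1 => // t Dt t0 _.
have D0 : D 0 by case: sol.
have nx0 : ~ interior K x0 by apply: (open_closedC (open_interior K)).
have ncl : ~ closure K (phi t).
  by move=> /(negmap_solution_closure_interior sol D0 Dt t0); rewrite phi0.
have : nbhs (phi t) (~` closure K) by exact: (closed_openC (@closed_closure _ K)).
by apply: filterS => y ny /interior_sub_closure.
Qed.

Lemma interior_Kset_forward_avoids_boundary D phi :
  is_solution (inflate F eps) D phi -> interior K (phi 0) ->
  forall t, D t -> 0 < t -> ~ boundary K (phi t).
Proof.
move=> sol i0 t Dt t0 [_]; apply; have D0 : D 0 by case: sol.
by apply: (solution_closure_interior sol D0 Dt t0); apply: interior_sub_closure.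
Qed.

Lemma compl_closure_Kset_backward_avoids_boundary D phi :
  is_solution (inflate F eps) D phi -> (~` closure K) (phi 0) ->
  forall t, D t -> t < 0 -> ~ boundary K (phi t).
Proof.
move=> sol ncl0 t Dt t0 [clt _]; apply: ncl0; apply: interior_sub_closure.
have D0 : D 0 by case: sol.
exact: (solution_closure_interior sol Dt D0 t0 clt).
Qed.

End Contractive.

Theorem lemma7 (R : realType) (n : nat) (F : 'rV[R]_n -> set 'rV[R]_n) :
  (forall x, F x !=set0 /\ compact (F x) /\ convex_set_rV (F x)) ->
  sv_continuous F ->
  forward_complete F ->
  forall (Xo : set 'rV[R]_n) (ebar : 'rV[R]_n -> R),
  continuous ebar -> (forall x, 0 < ebar x) ->
  forall eps : 'rV[R]_n -> R, continuous eps -> (forall x, 0 <= eps x) ->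
  (forall x, eps x < ebar x) ->
  let K := Kset F ebar Xo in
  [/\ forward_contractive (inflate F eps) (closure K),
      forward_contractive (inflate (negmap F) eps) (~` interior K),
      (forall D phi, is_solution (inflate F eps) D phi -> interior K (phi 0) ->
         forall t, D t -> 0 < t -> ~ boundary K (phi t)) &
      (forall D phi, is_solution (inflate F eps) D phi -> (~` closure K) (phi 0) ->
         forall t, D t -> t < 0 -> ~ boundary K (phi t))].
Proof.
move=> hF [hu hl] _ Xo ebar cb ebar0 eps ce eps0 lt K.
have hc x : compact (F x) by case: (hF x) => _ [].
by split; [exact: closure_Kset_forward_contractive
  |exact: compl_interior_Kset_forward_contractive
  |exact: interior_Kset_forward_avoids_boundary
  |exact: compl_closure_Kset_backward_avoids_boundary].
Qed.
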